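(* For every integer $n>0$, $\phi(e_n)=t$.
   Context: $e_n=\sum_{i_1<i_2<\dots<i_n,\ i_j\in\mathbb{Z}}x_{i_1}x_{i_2}\cdots x_{i_n}$ in commuting variables $x_i$, $i\in\mathbb{Z}$. A signed graph is a finite graph (loops and multiple edges allowed) with $\mathrm{sgn}:E\to\{+,-\}$; a coloring $\kappa:V\to\mathbb{Z}$ is proper if $\kappa(u)\ne\mathrm{sgn}(e)\kappa(v)$ for every edge $e$ with endpoints $u,v$. An orientation assigns to each half-edge (a loop has two) an arrow toward or away from the vertex, such that on a positive edge exactly one of the two arrows points toward its vertex and on a negative edge both point toward or both point away. A cycle is a closed walk in which, considering only the edges of the walk, every vertex of the walk has at least one arrow pointing into it and one pointing out of it; an orientation is acyclic if it has no cycle; a sink is a vertex all of whose incident arrows point toward it (an isolated vertex is a sink). A signed poset is an acyclic orientation $P$ of a signed graph. A proper coloring $\kappa$ preserves $P$ if for every edge $e$ and each endpoint $v$ of $e$, with $u$ the other endpoint ($u=v$ for a loop), the arrow of $P$ at the incidence of $e$ with $v$ points toward $v$ iff $\kappa(v)>\mathrm{sgn}(e)\kappa(u)$. $Y_P=\sum_\kappa\prod_v x_{\kappa(v)}$ over proper colorings preserving $P$; $\mathbb{Y}$ is the $\mathbb{Q}$-span of all $Y_P$ (it is closed under products and contains each $e_n$). $\phi:\mathbb{Y}\to\mathbb{Q}[t]$ is the (unique) $\mathbb{Q}$-linear map with $\phi(Y_P)=t^{\mathrm{sink}(P)}$, $\mathrm{sink}(P)$ the number of sinks of $P$ (its existence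 is established in the paper). *)

From mathcomp Require Import all_boot all_algebra.

Import GRing.Theory Num.Theory.
Local Open Scope ring_scope.

(* A finite signed graph: vertices 'I_nv, edges 'I_ne (loops and multiple
   edges allowed); edge e has endpoints (ends e).1, (ends e).2 and sign
   positive iff epos e. *)
Record sgraph := SGraph {
  nv : nat;
  ne : nat;
  ends : 'I_ne -> 'I_nv * 'I_nv;
  epos : 'I_ne -> bool }.

(* half-edges: (e, false) is the incidence of e with (ends e).1,
   (e, true) the incidence with (ends e).2 (a loop has two). *)
Definition hedge (G : sgraph) := ('I_(ne G) * bool)%type.

Definition hv (G : sgraph) (h : hedge G) : 'I_(nv G) :=
  if h.2 then (ends G h.1).2 else (ends G h.1).1.

(* An orientation: for each edge, whether the arrow at the first / second
   incidence points toward its vertex. *)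
Definition orient (G : sgraph) := 'I_(ne G) -> bool * bool.

Definition harr (G : sgraph) (o : orient G) (h : hedge G) : bool :=
  if h.2 then (o h.1).2 else (o h.1).1.

Definition is_orientation (G : sgraph) (o : orient G) : Prop :=
  forall e, ((o e).1 == (o e).2) = ~~ epos G e.

(* closed walks: a nonempty cyclic sequence of traversal steps (e, b),
   step (e,b) goes from hv G (e,b) to hv G (e, ~~ b). *)
Definition is_closed_walk (G : sgraph) (w : seq (hedge G)) : bool :=
  (w != [::]) &&
  cycle (fun x y : hedge G => hv G (x.1, ~~ x.2) == hv G y) w.

Definition is_cycle (G : sgraph) (o : orient G) (w : seq (hedge G)) : Prop :=
  is_closed_walk G w /\
  forall x, x \in w ->
    (exists h : hedge G, h.1 \in map fst w /\ hv G h = hv G x /\ harr G o h)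
    /\ (exists h : hedge G, h.1 \in map fst w /\ hv G h = hv G x /\ ~~ harr G o h).

Definition acyclic (G : sgraph) (o : orient G) : Prop :=
  forall w : seq (hedge G), ~ is_cycle G o w.

Definition is_sposet (G : sgraph) (o : orient G) : Prop :=
  is_orientation G o /\ acyclic G o.

Definition is_sink (G : sgraph) (o : orient G) (v : 'I_(nv G)) : bool :=
  [forall h : hedge G, (hv G h == v) ==> harr G o h].

Definition nsinks (G : sgraph) (o : orient G) : nat :=
  #|[pred v : 'I_(nv G) | is_sink G o v]|.

Definition sgnmul (G : sgraph) (e : 'I_(ne G)) (x : int) : int :=
  if epos G e then x else - x.

Definition proper (G : sgraph) (k : 'I_(nv G) -> int) : bool :=
  [forall e : 'I_(ne G), k (ends G e).1 != sgnmul G e (k (ends G e).2)].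

Definition preserves (G : sgraph) (o : orient G) (k : 'I_(nv G) -> int) : bool :=
  [forall h : hedge G,
     harr G o h == (sgnmul G h.1 (k (hv G (h.1, ~~ h.2))) < k (hv G h))].

(* Formal power series in commuting variables x_i (i : int), represented by
   their coefficient function on monomials; a monomial x_{i1}...x_{ik} is
   represented by any sequence [:: i1; ...; ik] (all series considered are
   invariant under permutation of the sequence). *)
Definition series := seq int -> rat.

(* number of colorings k : V -> Z, proper and preserving P, whose monomial
   prod_v x_{k v} is the monomial s.  Colorings with values in s are encoded
   through indices into undup s. *)
Definition Ycoef (G : sgraph) (o : orient G) (s : seq int) : nat :=
  #|[pred f : {ffun 'I_(nv G) -> 'I_(size (undup s))} |
     let k := fun v => nth 0 (undup s) (f v) in
     [&& perm_eq [seq k v | v <- enum 'I_(nv G)] s, proper G k & preserves G o k]]|.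

Definition Yser (G : sgraph) (o : orient G) : series :=
  fun s => (Ycoef G o s)%:R.

Definition eser (n : nat) : series :=
  fun s => if (size s == n) && uniq s then 1 else 0.

Record term := Term { tc : rat; tG : sgraph; tO : orient tG }.

Definition lincomb (F : seq term) : series :=
  fun s => \sum_(t <- F) tc t * Yser (tG t) (tO t) s.

Definition phival (F : seq term) : {poly rat} :=
  \sum_(t <- F) tc t *: 'X^(nsinks (tG t) (tO t)).

Fixpoint all_sposets (F : seq term) : Prop :=
  match F with
  | [::] => True
  | t :: F' => is_sposet (tG t) (tO t) /\ all_sposets F'
  end.

(* e_n is the Y-function of the chain on n vertices 0, 1, ..., n-1 whose edges
   {i, i+1} are positive and oriented upward.  A coloring preserves this chain iff
   it is strictly increasing along it (it is then automatically proper), so each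
   squarefree monomial of degree n is the monomial of exactly one preserving
   coloring, and no other monomial occurs.  The chain is acyclic: the upper endpoint of
   the highest edge of a closed walk has an outgoing arrow only along the next
   edge, which the walk does not use.  Its only sink is the top vertex, so
   phi(e_n) = t. *)

From Pilot Require Import Defs.
From mathcomp Require Import all_boot all_order all_algebra.
From Stdlib Require Import FunctionalExtensionality.
Import Order.TTheory GRing.Theory Num.Theory.
Local Open Scope ring_scope.

Lemma closed_walk_visits_ends {G : sgraph} {w : seq (hedge G)} {x : hedge G} b :
  is_closed_walk G w -> x \in w -> exists2 y, y \in w & hv G y = hv G (x.1, b).
Proof.
case/andP=> _ cyc xw; case: (eqVneq b x.2) => [-> | nb].
  by exists x; last by case: x {xw}.
exists (next w x); first by rewrite mem_next.
have -> : b = ~~ x.2 by case: b x.2 nb {xw} => [] [].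
by have /eqP <- := next_cycle cyc xw.
Qed.

Lemma lt_sorted_permE d (T : orderType d) (s t : seq T) :
  (perm_eq t s && sorted <%O t) = uniq s && (t == sort <=%O s).
Proof.
apply/andP/andP => [[pts st] | [us /eqP ->]]; last first.
  by rewrite perm_sort lt_sorted_uniq_le sort_uniq us sort_le_sorted.
have ut : uniq t by move: st; rewrite lt_sorted_uniq_le => /andP [].
split; first by rewrite -(perm_uniq pts).
apply/eqP/(lt_sorted_eq st); last by move=> x; rewrite mem_sort (perm_mem pts).
by rewrite lt_sorted_uniq_le sort_uniq -(perm_uniq pts) ut sort_le_sorted.
Qed.

Lemma sorted_map_ord (T : Type) (r : rel T) k (c : 'I_k.+1 -> T) :
  sorted r [seq c v | v <- enum 'I_k.+1] =
  [forall i : 'I_k, r (c (widen_ord (leqnSn k) i)) (c (lift ord0 i))].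
Proof.
set s := [seq c v | v <- enum 'I_k.+1].
have sz : size s = k.+1 by rewrite size_map size_enum_ord.
have nthE j : (j < k.+1)%N -> nth (c ord0) s j = c (inord j).
  move=> jk; rewrite (nth_map ord0) ?size_enum_ord //.
  by congr c; apply: ord_inj; rewrite nth_enum_ord // inordK.
have succE (i : 'I_k) : lift ord0 i = inord i.+1.
  by apply: ord_inj; rewrite inordK // ltnS.
have widenE (i : 'I_k) : widen_ord (leqnSn k) i = inord i.
  by apply: ord_inj; rewrite inordK // leqW.
apply/(sortedP (c ord0))/forallP => [H i | H i].
  have iS : (i < k.+1)%N := leqW (ltn_ord i).
  have := H i; rewrite sz !ltnS (ltn_ord i) (nthE i iS) (nthE i.+1) ?ltnS //.
  by rewrite succE widenE; apply.
rewrite sz ltnS => ik; rewrite (nthE i (ltnW ik)) (nthE i.+1 ik).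
by have := H (Ordinal ik); rewrite succE widenE.
Qed.

Definition chain (k : nat) : sgraph :=
  @SGraph k.+1 k (fun i => (widen_ord (leqnSn k) i, lift ord0 i)) (fun _ => true).

Definition chain_up (k : nat) : orient (chain k) := fun _ => (false, true).

Lemma chain_up_orientation k : is_orientation (chain k) (chain_up k).
Proof. by []. Qed.

Lemma harr_chain_up k (h : hedge (chain k)) : harr (chain k) (chain_up k) h = h.2.
Proof. by case: h => e []. Qed.

Lemma acyclic_chain_up k : acyclic (chain k) (chain_up k).
Proof.
move=> w [walk out]; have /andP [w0 _] := walk.
have [x0 x0w] : exists x0, x0 \in w.
  by case: w w0 {walk out} => // x0 w _; exists x0; exact: mem_head.
case: (@arg_maxnP _ x0 (mem w) (fun h => val h.1) x0w) => x xw xmax.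
have [z zw zx] := closed_walk_visits_ends true walk xw.
have [_ [h [hw [hz hout]]]] := out z zw.
move: hout; rewrite harr_chain_up; case: h hw hz => e [] //= hw.
rewrite zx /hv /= => /(congr1 val) /= ex _.
have [y yw ye] := mapP hw.
by have := xmax y yw; rewrite -ye /= ex /bump add1n ltnn.
Qed.

Lemma preserves_chain_upE k (c : 'I_k.+1 -> int) :
  preserves (chain k) (chain_up k) c = sorted <%O [seq c v | v <- enum 'I_k.+1].
Proof.
rewrite sorted_map_ord; apply/forallP/forallP => H e.
  by have := H (e, true); rewrite /harr /hv /sgnmul /= => /eqP <-.
case: e => e [] /=; rewrite /harr /hv /sgnmul /=; first by rewrite H.
by rewrite lt_gtF.
Qed.

Lemma proper_of_preserves_chain_up k (c : 'I_k.+1 -> int) :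
  preserves (chain k) (chain_up k) c -> Defs.proper (chain k) c.
Proof.
rewrite preserves_chain_upE sorted_map_ord => /forallP H; apply/forallP => e.
by rewrite /sgnmul /= lt_eqF.
Qed.

Definition coloring_word {m} (s : seq int) (f : {ffun 'I_m -> 'I_(size (undup s))}) :=
  [seq nth 0 (undup s) (f v) | v <- enum 'I_m].

Lemma size_coloring_word m s f : size (@coloring_word m s f) = m.
Proof. by rewrite size_map size_enum_ord. Qed.

Lemma nth_coloring_word m s f (v : 'I_m) :
  nth 0 (@coloring_word m s f) v = nth 0 (undup s) (f v).
Proof. by rewrite /coloring_word (nth_map v) ?size_enum_ord // nth_ord_enum. Qed.

Lemma coloring_word_inj m s : injective (@coloring_word m s).
Proof.
move=> f g fg; apply/ffunP => v; apply: ord_inj.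
have := congr1 (nth 0 ^~ v) fg; rewrite /= !nth_coloring_word.
by move=> /(congr1 (index ^~ (undup s))); rewrite !index_uniq ?undup_uniq.
Qed.

Lemma coloring_wordP m s t :
  size t = m -> {subset t <= s} -> exists f, @coloring_word m s f = t.
Proof.
move=> szt ts.
have idx (v : 'I_m) : (index (nth 0%R t v) (undup s) < size (undup s))%N.
  by rewrite index_mem mem_undup ts // mem_nth // szt.
exists [ffun v => Ordinal (idx v)].
apply: (@eq_from_nth _ 0) => [|i]; rewrite size_coloring_word ?szt // => im.
rewrite -[i]/(nat_of_ord (Ordinal im)) nth_coloring_word ffunE /= nth_index //.
by rewrite mem_undup ts // mem_nth // szt.
Qed.

Lemma Ycoef_chain_up k s :
  Ycoef (chain k) (chain_up k) s = ((size s == k.+1) && uniq s)%N.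
Proof.
rewrite /Ycoef; set A := [pred f | _].
have memA : A =i [pred f | uniq s && (coloring_word s f == sort <=%O s)].
  move=> f; rewrite !inE /= -lt_sorted_permE -preserves_chain_upE.
  by case: (boolP (preserves _ _ _)) => [/proper_of_preserves_chain_up -> | ]; rewrite ?andbF.
rewrite (eq_card memA); case: (uniq s) => /=; rewrite ?andbT ?andbF; last first.
  exact: eq_card0.
case: eqP => [szs | szsN]; last first.
  apply: eq_card0 => f; rewrite !inE; apply/negbTE/eqP => /(congr1 size).
  by rewrite size_coloring_word size_sort => /esym /szsN.
have [f fE] : exists f : {ffun 'I_k.+1 -> _}, coloring_word s f = sort <=%O s.
  by apply: coloring_wordP; [rewrite size_sort | move=> x; rewrite mem_sort].
apply: (eq_card1 (x := f)) => g; rewrite !inE -fE.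
by apply/eqP/eqP => [/coloring_word_inj | ->].
Qed.

Lemma nsinks_chain_up k : nsinks (chain k) (chain_up k) = 1%N.
Proof.
apply: (eq_card1 (x := ord_max)) => v; rewrite inE /is_sink.
apply/forallP/eqP => [sink_v | -> [e b]]; last first.
  rewrite harr_chain_up; case: b; rewrite ?implybT //=; apply/implyP => /eqP /(congr1 val) /= ek.
  by have := ltn_ord e; rewrite ek ltnn.
apply: ord_inj; have := ltn_ord v; rewrite ltnS leq_eqVlt => /orP [/eqP // | vk].
have hvE : hv (chain k) (Ordinal vk, false) = v by apply: ord_inj.
by have := sink_v (Ordinal vk, false); rewrite harr_chain_up hvE eqxx.
Qed.

Lemma eser_chain_up k : eser k.+1 = Yser (chain k) (chain_up k).
Proof.
by apply: functional_extensionality => s; rewrite /Yser Ycoef_chain_up /eser; case: ifP.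
Qed.

Theorem lemma6p9 (phi : series -> {poly rat})
  (Hphi : forall F : seq term,
     all_sposets F ->
     phi (lincomb F) = phival F)
  (n : nat) (Hn : (0 < n)%N) :
  phi (eser n) = 'X.
Proof.
case: n Hn => // k _.
have chain_sposet : is_sposet (chain k) (chain_up k).
  by split; [exact: chain_up_orientation | exact: acyclic_chain_up].
have := Hphi [:: Term 1 (chain k) (chain_up k)] (conj chain_sposet I).
rewrite /phival big_seq1 scale1r nsinks_chain_up expr1 => <-.
rewrite eser_chain_up; congr phi; apply: functional_extensionality => s.
by rewrite /lincomb big_seq1 mul1r.
Qed.
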